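(* Let $A=(a_{\ell,r})$ be an $n\times n$ flat matrix and $H=(h_{\ell,k})$ an $n\times n$ matrix whose entries all have absolute value $1$ and whose rows are pairwise orthogonal. For $r=1,\dots,n$ let $M_r$ be the $n\times n$ matrix with entries $(M_r)_{\ell,k}=\frac1{\sqrt n}a_{\ell,r}h_{\ell,k}$, i.e. $M_r=\frac1{\sqrt n}\operatorname{diag}(v_r)H$ where $v_r$ is the $r$-th column of $A$. Then $\{M_1,\dots,M_n\}$ is a complete system of mutually unbiased Hadamards if and only if every pair of distinct vertices of the vertex set $V_n$ is adjacent in $L(A)$ or in $L(H)$ (i.e. $L(A)$ and $L(H)$ together cover the complete graph on $V_n$).
   Context: A flat matrix is a complex matrix all of whose entries have absolute value $1$. For an $n\times n$ complex matrix $C$ with rows $c_1,\dots,c_n$, its L-graph $L(C)$ is the simple graph on the vertex set $V_n$ of all 2-element multisets $\{i,j\}$ with $1\le i\le j\le n$, in which distinct vertices $\{i,j\}$ and $\{k,l\}$ are adjacent iff $\langle c_i\circ c_j | c_k\circ c_l\rangle=0$; here $\circ$ is the entrywise product and $\langle x|y\rangle=\sum_t\overline{x_t}y_t$. A complex Hadamard matrix is a unitary $n\times n$ matrix all of whose entries have absolute value $1/\sqrt n$; two are mutually unbiased if $|\langle x|y\rangle|=1/\sqrt n$ for every column $x$ of one and column $y$ of the other; a complete system of mutually unbiased Hadamards is a set of $n$ pairwise mutually unbiased complex Hadamard $n\times n$ matrices. *)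

From HB Require Import structures.
From mathcomp Require Import all_boot all_order all_algebra all_field.
Set Implicit Arguments. Unset Strict Implicit. Unset Printing Implicit Defensive.
Import Order.TTheory GRing.Theory Num.Theory.
Local Open Scope ring_scope.

Definition ip n (x y : 'I_n -> algC) : algC := \sum_(t < n) (x t)^* * y t.

Definition hprod n (x y : 'I_n -> algC) : 'I_n -> algC := fun t => x t * y t.

Definition rowv n (C : 'M[algC]_n) (i : 'I_n) : 'I_n -> algC := fun t => C i t.
Definition colv n (C : 'M[algC]_n) (j : 'I_n) : 'I_n -> algC := fun t => C t j.

Definition flat n (C : 'M[algC]_n) : Prop := forall i j, `|C i j| = 1.

Definition ctrans n (C : 'M[algC]_n) : 'M[algC]_n := \matrix_(i, j) (C j i)^*.

Definition unitary n (C : 'M[algC]_n) : Prop :=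
  C *m ctrans C = 1%:M /\ ctrans C *m C = 1%:M.

Definition complex_hadamard n (C : 'M[algC]_n) : Prop :=
  unitary C /\ forall i j, `|C i j| = (sqrtC n%:R)^-1.

Definition mutually_unbiased n (C D : 'M[algC]_n) : Prop :=
  forall j k, `| ip (colv C j) (colv D k) | = (sqrtC n%:R)^-1.

Definition complete_MUH_system n (M : 'I_n -> 'M[algC]_n) : Prop :=
  (forall r, complex_hadamard (M r)) /\
  (forall r s, r != s -> mutually_unbiased (M r) (M s)).

(* vertices of V_n: 2-element multisets {i,j}, encoded as pairs (i,j) with i <= j *)
Definition vertex n (v : 'I_n * 'I_n) : bool := (v.1 <= v.2)%N.

(* adjacency in the L-graph L(C) (for distinct vertices) *)
Definition Ladj n (C : 'M[algC]_n) (v w : 'I_n * 'I_n) : bool :=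
  ip (hprod (rowv C v.1) (rowv C v.2)) (hprod (rowv C w.1) (rowv C w.2)) == 0.

Definition Mr n (A H : 'M[algC]_n) (r : 'I_n) : 'M[algC]_n :=
  \matrix_(l, k) ((sqrtC n%:R)^-1 * A l r * H l k).

From HB Require Import structures.
From mathcomp Require Import all_boot all_order all_algebra all_field.
From Stdlib Require Import ArithRing.
Import Order.TTheory GRing.Theory Num.Theory.
Local Open Scope ring_scope.

(* Write Y(r,s;j,k) = sum_l conj(a_lr h_lj) a_ls h_lk, so that
   <col_j M_r | col_k M_s> = Y/n.  For flat A and H, expanding |Y|^2 gives
   |Y|^2 = n + G(r,s;j,k), where G is a sum over ordered pairs k = (l,m) of
   distinct rows of the product of a unimodular "pair character" of A (on the
   column pair (r,s)) and one of H (on (j,k)).  Hence M_r and M_s are unbiased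
   iff G(r,s;.,.) vanishes, and since every M_r is already a complex Hadamard
   matrix (the rows of H are orthogonal), the system is complete iff the
   "cross energy" sum_{r<>s} sum_{j,k} |G|^2 vanishes.  Expanding the squares
   and using orthogonality of characters, this energy equals
   sum_{k <> k'} |W_A(k,k')|^2 |W_H(k,k')|^2, where W_C(k,k') is an inner
   product <c_l o c_m' | c_m o c_l'> of entrywise products of rows, i.e. an
   L-graph inner product; the diagonal column pairs r = s contribute a known
   constant because the M_r are Hadamard.  So completeness holds iff every
   such pair of row-products is orthogonal for A or for H, which is exactly
   the covering condition (vertices sharing an index are always adjacent in
   L(H) by orthogonality of the rows of H). *)

Lemma normC1_mul_conj (x : algC) : `|x| = 1 -> x * x^* = 1.
Proof. by move=> x1; rewrite -normCK x1 expr1n. Qed.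

Lemma normC1_conj_mul (x : algC) : `|x| = 1 -> x^* * x = 1.
Proof. by move=> x1; rewrite mulrC normC1_mul_conj. Qed.

Lemma mulrACA4 (a b c d e f g h : algC) :
  ((a * b) * (c * d)) * ((e * f) * (g * h)) = ((a * e) * (c * g)) * ((b * f) * (d * h)).
Proof.
rewrite (mulrACA a b c d) (mulrACA e f g h) (mulrACA (a * c)).
by rewrite (mulrACA a c e g) (mulrACA b d f h).
Qed.

Lemma sum_norm2_bilinear {I J K : finType} (P : pred K)
    (a : K -> I -> algC) (b : K -> J -> algC) :
  \sum_i \sum_j (\sum_(k | P k) a k i * b k j) * (\sum_(k | P k) a k i * b k j)^*
  = \sum_(k | P k) \sum_(k' | P k')
      (\sum_i a k i * (a k' i)^*) * (\sum_j b k j * (b k' j)^*).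
Proof.
transitivity (\sum_i \sum_j \sum_(k | P k) \sum_(k' | P k')
                (a k i * (a k' i)^*) * (b k j * (b k' j)^*)).
  apply: eq_bigr => i _; apply: eq_bigr => j _.
  rewrite rmorph_sum /= big_distrlr /=; apply: eq_bigr => k _; apply: eq_bigr => k' _.
  by rewrite rmorphM /= mulrACA.
rewrite exchange_big /=.
transitivity (\sum_j \sum_(k | P k) \sum_(k' | P k') \sum_i
                (a k i * (a k' i)^*) * (b k j * (b k' j)^*)).
  apply: eq_bigr => j _; rewrite exchange_big /=; apply: eq_bigr => k _.
  by rewrite exchange_big.
rewrite exchange_big /=; apply: eq_bigr => k _.
rewrite exchange_big /=; apply: eq_bigr => k' _.
by rewrite big_distrlr /= exchange_big.
Qed.

Lemma sum_pair_char {n} (f g : 'I_n -> algC) :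
  \sum_(i : 'I_n * 'I_n) (f i.1 * (f i.2)^*) * (g i.1 * (g i.2)^*)^*
  = (\sum_r f r * (g r)^*) * (\sum_r f r * (g r)^*)^*.
Proof.
rewrite -(pair_big xpredT xpredT (fun r s => (f r * (f s)^*) * (g r * (g s)^*)^*)) /=.
rewrite rmorph_sum big_distrlr /=; apply: eq_bigr => r _; apply: eq_bigr => s _.
by rewrite !rmorphM /= !conjCK mulrACA.
Qed.

Lemma sum_offdiag_const {n} (c : algC) :
  \sum_(k : 'I_n * 'I_n | k.1 != k.2) c = c *+ n.-1 *+ n.
Proof.
rewrite -(pair_big_dep xpredT (fun a b => a != b) (fun _ _ => c)) /=.
rewrite -[n in _ *+ n]card_ord -sumr_const; apply: eq_bigr => a _.
rewrite (eq_bigl (predC1 a)); last by move=> b /=; rewrite eq_sym.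
by rewrite sumr_const cardC1 card_ord.
Qed.

Lemma sum_diag_offdiag {n} (c1 c2 : algC) :
  \sum_(j : 'I_n * 'I_n) (if j.1 == j.2 then c1 else c2) = (c1 + c2 *+ n.-1) *+ n.
Proof.
rewrite -(pair_bigA _ (fun a b => if a == b then c1 else c2)) /=.
rewrite -[n in _ *+ n]card_ord -sumr_const; apply: eq_bigr => a _.
rewrite (bigD1 a) //= eqxx; congr (_ + _).
rewrite (eq_bigr (fun _ => c2)); last by move=> b; rewrite eq_sym => /negbTE ->.
rewrite (eq_bigl (predC1 a)); last by move=> b /=.
by rewrite sumr_const cardC1 card_ord.
Qed.

Lemma conj_inv_sqrtC {n} : ((sqrtC n%:R)^-1 : algC)^* = (sqrtC n%:R)^-1.
Proof. by apply: geC0_conj; rewrite invr_ge0 sqrtC_ge0 ler0n. Qed.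

Lemma inv_sqrtC_sq {n} : ((sqrtC n%:R)^-1 * (sqrtC n%:R)^-1 : algC) = (n%:R)^-1.
Proof. by rewrite -invfM -expr2 sqrtCK. Qed.

Lemma norm_scaled_iff {n} (Y : algC) : (0 < n)%N ->
  `|(n%:R)^-1 * Y| = (sqrtC n%:R)^-1 <-> Y * Y^* = n%:R.
Proof.
move=> n_gt0.
have nz : (n%:R : algC) != 0 by rewrite pnatr_eq0 -lt0n.
have sqrt_sq : (n%:R : algC) = sqrtC n%:R * sqrtC n%:R by rewrite -expr2 sqrtCK.
rewrite normrM normfV normr_nat -normCK; split => [normY|Y2].
  have -> : `|Y| = sqrtC n%:R.
    by rewrite -[LHS](mulVKf nz) normY {1}sqrt_sq -mulrA mulfV ?sqrtC_eq0 // mulr1.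
  by rewrite sqrtCK.
have -> : `|Y| = sqrtC n%:R by rewrite -Y2 sqrCK.
by rewrite {1}sqrt_sq invfM -mulrA mulVf ?sqrtC_eq0 // mulr1.
Qed.

Lemma ip_hprodC_l {n} (a b u : 'I_n -> algC) : ip (hprod a b) u = ip (hprod b a) u.
Proof. by rewrite /ip; apply: eq_bigr => t _; rewrite /hprod [a t * _]mulrC. Qed.

Lemma ip_hprodC_r {n} (a b u : 'I_n -> algC) : ip u (hprod a b) = ip u (hprod b a).
Proof. by rewrite /ip; apply: eq_bigr => t _; rewrite /hprod [a t * _]mulrC. Qed.

Definition pair_phase {n} (C : 'M[algC]_n) (k : 'I_n * 'I_n) (r : 'I_n) : algC :=
  (C k.1 r)^* * C k.2 r.

Definition pair_char {n} (C : 'M[algC]_n) (k i : 'I_n * 'I_n) : algC :=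
  pair_phase C k i.1 * (pair_phase C k i.2)^*.

(* W_C(k,k') = <c_l o c_m' | c_m o c_l'> for k = (l,m), k' = (l',m'): the
   L-graph inner product governing orthogonality of two pair characters. *)
Definition row_overlap {n} (C : 'M[algC]_n) (k k' : 'I_n * 'I_n) : algC :=
  ip (hprod (rowv C k.1) (rowv C k'.2)) (hprod (rowv C k.2) (rowv C k'.1)).

Lemma pair_char_diag {n} (C : 'M[algC]_n) l i : flat C -> pair_char C (l, l) i = 1.
Proof. by move=> flatC; rewrite /pair_char /pair_phase /= !normC1_conj_mul ?rmorph1 ?mulr1. Qed.

Lemma pair_char_norm2 {n} (C : 'M[algC]_n) k i :
  flat C -> pair_char C k i * (pair_char C k i)^* = 1.
Proof.
move=> flatC; apply: normC1_mul_conj.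
by rewrite /pair_char /pair_phase !(normrM, norm_conjC, flatC) !mulr1.
Qed.

Lemma pair_char_dot {n} (C : 'M[algC]_n) k k' :
  \sum_i pair_char C k i * (pair_char C k' i)^* = row_overlap C k k' * (row_overlap C k k')^*.
Proof.
have overlap r : pair_phase C k r * (pair_phase C k' r)^* =
    (C k.1 r * C k'.2 r)^* * (C k.2 r * C k'.1 r).
  by rewrite /pair_phase !rmorphM /= conjCK [RHS]mulrACA [(C k'.2 r)^* * _]mulrC.
by rewrite /pair_char sum_pair_char /row_overlap /ip; under eq_bigr do rewrite overlap.
Qed.

(* Rows of a flat matrix with orthogonal rows: any two row-products sharing a
   factor are orthogonal, so vertices with a common index are L-adjacent. *)
Lemma hprod_shared_orth {n} (H : 'M[algC]_n) a b c : flat H ->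
  (forall i k : 'I_n, i != k -> ip (rowv H i) (rowv H k) = 0) -> b != c ->
  ip (hprod (rowv H a) (rowv H b)) (hprod (rowv H a) (rowv H c)) = 0.
Proof.
move=> flatH orthoH bc; rewrite -(orthoH _ _ bc); apply: eq_bigr => t _.
by rewrite /hprod /rowv rmorphM /= mulrACA normC1_conj_mul // mul1r.
Qed.

Definition sort_pair {n} (p : 'I_n * 'I_n) : 'I_n * 'I_n :=
  if (p.1 <= p.2)%N then p else (p.2, p.1).

Lemma vertex_sort_pair {n} (p : 'I_n * 'I_n) : vertex (sort_pair p).
Proof. by rewrite /vertex /sort_pair; case: ifP => //= /negbT; rewrite -ltnNge => /ltnW. Qed.

Lemma Ladj_sort_pair {n} (C : 'M[algC]_n) x y z w :
  Ladj C (sort_pair (x, y)) (sort_pair (z, w)) =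
  (ip (hprod (rowv C x) (rowv C y)) (hprod (rowv C z) (rowv C w)) == 0).
Proof.
rewrite /Ladj /sort_pair /=; case: ifP => _; case: ifP => _ //=.
- by rewrite ip_hprodC_r.
- by rewrite ip_hprodC_l.
- by rewrite ip_hprodC_l ip_hprodC_r.
Qed.

Lemma sort_pair_neq {n} {l m l' m' : 'I_n} :
  l != m -> l' != m' -> (l', m') != (l, m) -> sort_pair (l, m') != sort_pair (m, l').
Proof.
move=> lm lm' ne; apply/eqP; rewrite /sort_pair /=.
by case: ifP => _; case: ifP => _ [] e1 e2; subst; rewrite ?eqxx in lm lm' ne.
Qed.

Section MutuallyUnbiasedSystem.

Variables (n : nat) (A H : 'M[algC]_n).
Hypotheses (flatA : flat A) (flatH : flat H)
  (orthoH : forall i k : 'I_n, i != k -> ip (rowv H i) (rowv H k) = 0).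

(* n times the inner product of column j of M_r with column k of M_s. *)
Definition col_gram (i j : 'I_n * 'I_n) : algC :=
  \sum_l (A l i.1 * H l j.1)^* * (A l i.2 * H l j.2).

(* The off-diagonal part G of |col_gram|^2. *)
Definition cross_term (i j : 'I_n * 'I_n) : algC :=
  \sum_(k | k.1 != k.2) pair_char A k i * pair_char H k j.

Definition cross_energy : algC :=
  \sum_(i | i.1 != i.2) \sum_j cross_term i j * (cross_term i j)^*.

Definition overlap_term (k k' : 'I_n * 'I_n) : algC :=
  (row_overlap A k k' * (row_overlap A k k')^*) *
  (row_overlap H k k' * (row_overlap H k k')^*).

Definition overlap_energy : algC :=
  \sum_(k | k.1 != k.2) \sum_(k' | (k'.1 != k'.2) && (k' != k)) overlap_term k k'.

Lemma ip_col_Mr r s j k :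
  ip (colv (Mr A H r) j) (colv (Mr A H s) k) = (n%:R)^-1 * col_gram (r, s) (j, k).
Proof.
rewrite /ip /col_gram big_distrr /=; apply: eq_bigr => l _.
rewrite /colv !mxE -!mulrA rmorphM /= conj_inv_sqrtC -mulrA -inv_sqrtC_sq -mulrA.
by congr (_ * _); rewrite mulrCA rmorphM /= -mulrA.
Qed.

(* |Y|^2 = n + G: the diagonal l = m of the expansion contributes n. *)
Lemma col_gram_norm2 i j : col_gram i j * (col_gram i j)^* = n%:R + cross_term i j.
Proof.
have term l m : ((A l i.1 * H l j.1)^* * (A l i.2 * H l j.2)) *
    ((A m i.1 * H m j.1)^* * (A m i.2 * H m j.2))^* =
    pair_char A (l, m) i * pair_char H (l, m) j.
  by rewrite /pair_char /pair_phase /= !rmorphM /= !conjCK mulrACA4.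
rewrite /col_gram rmorph_sum big_distrlr /=.
transitivity (\sum_l (1 + \sum_(m | m != l) pair_char A (l, m) i * pair_char H (l, m) j)).
  apply: eq_bigr => l _; rewrite (bigD1 l) //= term !pair_char_diag // mulr1.
  by congr (_ + _); apply: eq_bigr => m _; rewrite term.
rewrite big_split /= sumr_const card_ord; congr (_ + _).
rewrite /cross_term (pair_big_dep xpredT (fun l m => m != l)
  (fun l m => pair_char A (l, m) i * pair_char H (l, m) j)) /=.
by apply: eq_big => [[l m]|[l m]] //=; rewrite eq_sym.
Qed.

(* Each M_r is a complex Hadamard matrix: the phases a_lr cancel in M_r M_r^*. *)
Lemma Mr_hadamard r : complex_hadamard (Mr A H r).
Proof.
have n_gt0 : (0 < n)%N := leq_ltn_trans (leq0n r) (ltn_ord r).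
have rows : Mr A H r *m ctrans (Mr A H r) = 1%:M.
  apply/matrixP => l l'; rewrite !mxE.
  transitivity ((sqrtC n%:R)^-1 * ((sqrtC n%:R)^-1)^* * (A l r * (A l' r)^*) *
                 ip (rowv H l') (rowv H l)).
    rewrite /ip big_distrr /=; apply: eq_bigr => k _.
    rewrite !mxE /rowv !rmorphM /= -!mulrA; congr (_ * _).
    rewrite (mulrCA (H l k)) (mulrCA (A l r)); congr (_ * (_ * _)).
    by rewrite mulrCA [H l k * _]mulrC.
  have [<-|ne] := eqVneq l l'; last by rewrite orthoH 1?eq_sym // mulr0.
  rewrite normC1_mul_conj // mulr1 conj_inv_sqrtC inv_sqrtC_sq /ip.
  under eq_bigr => k _ do rewrite /rowv normC1_conj_mul //.
  by rewrite sumr_const card_ord mulVf // pnatr_eq0 -lt0n.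
split; first by split => //; apply: mulmx1C.
move=> i j; rewrite mxE !normrM flatA flatH !mulr1 normfV ger0_norm //.
by rewrite sqrtC_ge0 ler0n.
Qed.

Lemma col_gram_diag r j k : col_gram (r, r) (j, k) = n%:R * (j == k)%:R.
Proof.
have n_gt0 : (0 < n)%N := leq_ltn_trans (leq0n r) (ltn_ord r).
have [[_ cols] _] := Mr_hadamard r.
have := congr1 (fun M : 'M[algC]_n => M j k) cols; rewrite !mxE.
have -> : \sum_l ctrans (Mr A H r) j l * Mr A H r l k =
          ip (colv (Mr A H r) j) (colv (Mr A H r) k).
  by apply: eq_bigr => l _; rewrite mxE.
by rewrite ip_col_Mr => <-; rewrite mulVKf // pnatr_eq0 -lt0n.
Qed.

Lemma cross_term_diag_norm2 r j k :
  cross_term (r, r) (j, k) * (cross_term (r, r) (j, k))^* =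
  if j == k then ((n * n - n) * (n * n - n))%:R else (n * n)%:R.
Proof.
have := col_gram_norm2 (r, r) (j, k); rewrite col_gram_diag.
have [_|_] := eqVneq j k; rewrite ?mulr1 ?mulr0 ?mul0r ?rmorph0 ?mul0r addrC => /eqP.
  rewrite conjC_nat -natrM -subr_eq -natrB ?leq_pmulr // => [/eqP <-|].
    by rewrite conjC_nat natrM.
  by case: (n) r => [[]|].
rewrite eq_sym addr_eq0 => /eqP ->.
by rewrite rmorphN /= conjC_nat mulrNN natrM.
Qed.

Lemma diag_cross_energy :
  \sum_(i | i.1 == i.2) \sum_j cross_term i j * (cross_term i j)^* =
  (n * n)%:R * (n * n)%:R *+ n.-1 *+ n.
Proof.
rewrite -(pair_big_dep xpredT (fun a b => a == b)
   (fun a b => \sum_j cross_term (a, b) j * (cross_term (a, b) j)^*)) /=.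
rewrite -[n in _ *+ n]card_ord -sumr_const; apply: eq_bigr => r _.
rewrite (eq_bigl (pred1 r)); last by move=> b /=; rewrite eq_sym.
rewrite big_pred1_eq (eq_bigr (fun j : 'I_n * 'I_n => if j.1 == j.2
    then ((n * n - n) * (n * n - n))%:R else (n * n)%:R)); last first.
  by move=> [j k] _; rewrite cross_term_diag_norm2.
rewrite sum_diag_offdiag -natrM -!mulrnA -natrD -mulrnA; congr (_%:R).
case: (n) r => [[]//|p _] /=.
have -> : (p.+1 * p.+1 - p.+1 = p.+1 * p)%N by rewrite -{3}(muln1 p.+1) -mulnBr subn1.
by rewrite -!multE -!plusE; ring.
Qed.

(* Expanding all the squares: the total energy is the same constant plus the
   overlap energy, the terms k = k' contributing exactly that constant. *)
Lemma total_cross_energy :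
  \sum_i \sum_j cross_term i j * (cross_term i j)^* =
  (n * n)%:R * (n * n)%:R *+ n.-1 *+ n + overlap_energy.
Proof.
rewrite (sum_norm2_bilinear (fun k : 'I_n * 'I_n => k.1 != k.2) (pair_char A) (pair_char H)).
rewrite /overlap_energy -sum_offdiag_const -big_split /=; apply: eq_bigr => k offk.
rewrite (bigD1 k) //=; congr (_ + _).
  rewrite (eq_bigr (fun _ => 1)); last by move=> *; rewrite pair_char_norm2.
  rewrite [X in _ * X](eq_bigr (fun _ => 1)); last by move=> *; rewrite pair_char_norm2.
  by rewrite sumr_const card_prod card_ord.
by apply: eq_bigr => k' _; rewrite /overlap_term !pair_char_dot.
Qed.

Lemma cross_energy_eq : cross_energy = overlap_energy.
Proof.
apply: (@addrI _ ((n * n)%:R * (n * n)%:R *+ n.-1 *+ n)).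
rewrite -total_cross_energy -diag_cross_energy /cross_energy.
by rewrite [RHS](bigID (fun i : 'I_n * 'I_n => i.1 == i.2)).
Qed.

Lemma unbiased_iff_cross_term0 r s :
  mutually_unbiased (Mr A H r) (Mr A H s) <-> forall j k, cross_term (r, s) (j, k) = 0.
Proof.
have n_gt0 : (0 < n)%N := leq_ltn_trans (leq0n r) (ltn_ord r).
split => [unb j k|G0 j k]; last by rewrite ip_col_Mr norm_scaled_iff // col_gram_norm2 G0 addr0.
have := unb j k; rewrite ip_col_Mr norm_scaled_iff // col_gram_norm2 => e.
by apply: (@addrI _ n%:R); rewrite e addr0.
Qed.

Lemma complete_iff_cross_energy0 : complete_MUH_system (Mr A H) <-> cross_energy = 0.
Proof.
have energy_ge0 i : 0 <= \sum_j cross_term i j * (cross_term i j)^*.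
  by apply: sumr_ge0 => j _; apply: mul_conjC_ge0.
split => [[_ unb]|E0].
  apply: big1 => [[r s]] /= rs; apply: big1 => [[j k]] _.
  by have /unbiased_iff_cross_term0 -> := unb r s rs; rewrite mul0r.
split => [|r s rs]; first exact: Mr_hadamard.
apply/unbiased_iff_cross_term0 => j k.
have := psumr_eq0P (fun i _ => energy_ge0 i) E0 (i := (r, s)) rs.
move/(psumr_eq0P (fun j _ => mul_conjC_ge0 _)) => /(_ (j, k) isT) /eqP.
by rewrite mulf_eq0 conjC_eq0 orbb => /eqP.
Qed.

Lemma overlap_energy0_iff : overlap_energy = 0 <->
  (forall k k' : 'I_n * 'I_n, k.1 != k.2 -> k'.1 != k'.2 -> k' != k ->
     (row_overlap A k k' == 0) || (row_overlap H k k' == 0)).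
Proof.
have term_ge0 k k' : 0 <= overlap_term k k' by rewrite mulr_ge0 // mul_conjC_ge0.
have term0 k k' : (overlap_term k k' == 0) =
    (row_overlap A k k' == 0) || (row_overlap H k k' == 0).
  by rewrite !mulf_eq0 !conjC_eq0 !orbb.
split => [E0 k k' offk offk' ne|W0].
  have inner := psumr_eq0P (fun k _ => sumr_ge0 _ (fun k' _ => term_ge0 k k')) E0 offk.
  by rewrite -term0 (psumr_eq0P (fun k' _ => term_ge0 k k') inner) // offk' ne.
apply: big1 => k offk; apply: big1 => k' /andP[offk' ne].
by apply/eqP; rewrite term0 W0.
Qed.

(* The covering condition on V_n is the vanishing of W_A or W_H on all pairs
   of distinct off-diagonal row pairs; vertices sharing an index are covered
   by L(H) automatically. *)
Lemma cover_iff_overlaps :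
  (forall v w : 'I_n * 'I_n, vertex v -> vertex w -> v != w -> Ladj A v w || Ladj H v w) <->
  (forall k k' : 'I_n * 'I_n, k.1 != k.2 -> k'.1 != k'.2 -> k' != k ->
     (row_overlap A k k' == 0) || (row_overlap H k k' == 0)).
Proof.
split => [cover [l m] [l' m'] /= lm lm' ne|W0 [v1 v2] [w1 w2] /= vv ww vw].
  have := cover _ _ (vertex_sort_pair (l, m')) (vertex_sort_pair (m, l'))
    (sort_pair_neq lm lm' ne).
  by rewrite !Ladj_sort_pair.
have [e1|n1] := eqVneq v1 w1.
  apply/orP; right; rewrite /Ladj /= e1 hprod_shared_orth //.
  by apply: contra vw => /eqP <-; rewrite e1.
have [e2|n2] := eqVneq v2 w2.
  apply/orP; right; rewrite /Ladj /= e2 ip_hprodC_l ip_hprodC_r hprod_shared_orth //.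
have ne : (w2, v2) != (v1, w1).
  apply/eqP => -[e3 e4]; move: n1 vv ww; rewrite /vertex /= -e3 -e4 => /negP n1 h1 h2.
  by apply: n1; apply/eqP/val_inj/anti_leq; rewrite h1 h2.
have offk' : (w2, v2).1 != (w2, v2).2 by rewrite /= eq_sym.
by have := W0 (v1, w1) (w2, v2) n1 offk' ne; rewrite /row_overlap /Ladj.
Qed.

End MutuallyUnbiasedSystem.

Theorem proposition7 (n : nat) (A H : 'M[algC]_n) :
  flat A ->
  flat H ->
  (forall i k : 'I_n, i != k -> ip (rowv H i) (rowv H k) = 0) ->
  (complete_MUH_system (Mr A H) <->
   (forall v w : 'I_n * 'I_n, vertex v -> vertex w -> v != w ->
      Ladj A v w || Ladj H v w)).
Proof.
move=> flatA flatH orthoH.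
rewrite complete_iff_cross_energy0 // cross_energy_eq // overlap_energy0_iff.
by rewrite cover_iff_overlaps.
Qed.
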